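(* Let $p$ be a prime, let $H$ be any finite Abelian $p$-group (possibly trivial), and let $G\cong C_p\oplus H$. Let $S$ be a normal sequence over $G$ with $|S|=\mathsf{D}(G)+i-1$, where $i\in\{1,2,\dots,p-1\}$. Then $S=0^iT$, where $T$ is a zero-sumfree sequence over $G$.
   Context: $C_p$ denotes the cyclic group of order $p$. A sequence over a finite Abelian group $G$ (written additively) is a finite multiset of elements of $G$; its length $|S|$ is the number of terms counted with multiplicity, and a subsequence is a sub-multiset. $S$ is a zero-sum sequence if the sum of its terms is $0$; $S$ is zero-sumfree if no non-empty subsequence has sum $0$. The Davenport constant $\mathsf{D}(G)$ is the smallest positive integer $t$ such that every sequence over $G$ of length at least $t$ contains a non-empty zero-sum subsequence. A sequence $S$ over $G$ with $|S|\ge\mathsf{D}(G)$ is normal if every zero-sum subsequence $S'$ of $S$ satisfies $|S'|\le|S|-\mathsf{D}(G)+1$. The notation $0^iT$ denotes the sequence obtained from $T$ by adjoining $i$ copies of $0$. *)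

From mathcomp Require Import all_boot all_algebra.
Set Implicit Arguments. Unset Strict Implicit. Unset Printing Implicit Defensive.
Import GRing.Theory.
Local Open Scope ring_scope.

(* A sequence over G is a seq G viewed as a multiset. *)

Definition submseq (G : finZmodType) (T S : seq G) : Prop :=
  forall x : G, (count_mem x T <= count_mem x S)%N.

Definition zero_sum (G : finZmodType) (S : seq G) : Prop :=
  \sum_(x <- S) x = 0.

Definition has_nonempty_zs (G : finZmodType) (S : seq G) : Prop :=
  exists T : seq G, [/\ submseq T S, (0 < size T)%N & zero_sum T].

Definition zero_sumfree (G : finZmodType) (S : seq G) : Prop :=
  ~ has_nonempty_zs S.

Definition is_davenport (G : finZmodType) (D : nat) : Prop :=
  [/\ (0 < D)%N,
      (forall S : seq G, (D <= size S)%N -> has_nonempty_zs S)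
    & (forall t : nat, (0 < t)%N ->
         (forall S : seq G, (t <= size S)%N -> has_nonempty_zs S) -> (D <= t)%N)].

Definition normal_seq (G : finZmodType) (D : nat) (S : seq G) : Prop :=
  (D <= size S)%N /\
  (forall S' : seq G, submseq S' S -> zero_sum S' -> (size S' <= size S - D + 1)%N).

From HB Require Import structures.
From mathcomp Require Import all_boot all_algebra all_fingroup all_solvable zify.
(** The argument runs in the group algebra F_p[G] of the p-group G.  Writing G
    as a direct sum of cyclic groups <e_j>, every 1 - X^g lies in the ideal
    generated by the X^(e_j) - 1, and (X^(e_j) - 1)^#[e_j] = 0 in characteristic
    p; so, by pigeonhole, any product of 1 + sum_j (#[e_j] - 1) factors 1 - X^g
    vanishes (Olson), and that number is at most D(G) because the sequence
    prod_j e_j^(#[e_j] - 1) is zero-sumfree.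

    Put P(Y) = prod_(s in S) (1 - Y X^s).  Expanding 1 - Y X^s as
    (1 - Y) + Y (1 - X^s) shows that (1 - Y)^i divides P when |S| = D + i - 1.
    The coefficient of X^0 in the Y^j-coefficient of P is (-1)^j times the
    number of zero-sum subsequences of S of length j, which normality kills for
    j > i.  Hence the image of P under a |-> a(0) has degree at most i and
    constant term 1, so it is exactly (1 - Y)^i, and its Y-coefficient says
    that S has i zeros modulo p.  Normality also bounds the number of zeros
    by i < p, so there are exactly i of them, and a zero-sum subsequence of the
    remaining terms, together with all the zeros, would be too long. *)

Set Implicit Arguments. Unset Strict Implicit. Unset Printing Implicit Defensive.
Import GRing.Theory.
Local Open Scope ring_scope.

Section GroupAlgebra.
Variables (G : finZmodType) (F : comNzRingType).

Definition galg : Type := {ffun G -> F}.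
HB.instance Definition _ := GRing.Zmodule.on galg.

Definition galg_mul (a b : galg) : galg := [ffun g => \sum_h a h * b (g - h)].
Definition galg_one : galg := [ffun g => (g == 0)%:R].

Lemma galg_mulC : commutative galg_mul.
Proof.
move=> a b; apply/ffunP=> g; rewrite !ffunE (reindex_inj (inv_inj (subKr g))) /=.
by apply: eq_bigr => h _; rewrite subKr mulrC.
Qed.

Lemma galg_mul1 : left_id galg_one galg_mul.
Proof.
move=> a; apply/ffunP=> g; rewrite !ffunE (bigD1 0) //= big1 => [|h /negbTE h0].
  by rewrite ffunE eqxx mul1r subr0 addr0.
by rewrite ffunE h0 mul0r.
Qed.

Lemma galg_mulDl : left_distributive galg_mul +%R.
Proof.
move=> a b c; apply/ffunP=> g; rewrite !ffunE -big_split /=.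
by apply: eq_bigr => h _; rewrite ffunE mulrDl.
Qed.

Lemma galg_mulA : associative galg_mul.
Proof.
move=> a b c; apply/ffunP=> g; rewrite !ffunE.
transitivity (\sum_k \sum_h a k * b (h - k) * c (g - h)); last first.
  by rewrite exchange_big; apply: eq_bigr => h _; rewrite ffunE mulr_suml.
apply: eq_bigr => k _; rewrite ffunE mulr_sumr [RHS](reindex_inj (addrI k)) /=.
apply: eq_bigr => l _; rewrite mulrA; congr (_ * _ * c _).
  by rewrite addrC addKr.
by rewrite opprD addrA.
Qed.

Lemma galg_one_neq0 : galg_one != 0.
Proof. by apply/eqP => /ffunP /(_ 0) /eqP; rewrite !ffunE eqxx oner_eq0. Qed.

HB.instance Definition _ := GRing.Zmodule_isComNzRing.Build galg
  galg_mulA galg_mulC galg_mul1 galg_mulDl galg_one_neq0.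

Lemma galgM (a b : galg) g : (a * b) g = \sum_h a h * b (g - h).
Proof. by rewrite ffunE. Qed.

Lemma galg1 g : (1 : galg) g = (g == 0)%:R.
Proof. by rewrite ffunE. Qed.

Definition gmono (x : G) : galg := [ffun h => (h == x)%:R].

Lemma gmono0 : gmono 0 = 1.
Proof. by apply/ffunP => h; rewrite !ffunE. Qed.

Lemma gmonoD x y : gmono (x + y) = gmono x * gmono y.
Proof.
apply/ffunP => g; rewrite galgM (bigD1 x) //= big1 => [|h /negbTE hx]; last first.
  by rewrite ffunE hx mul0r.
by rewrite !ffunE eqxx mul1r addr0 subr_eq addrC.
Qed.

Lemma gmono_sum (I : Type) (r : seq I) (P : pred I) (f : I -> G) :
  gmono (\sum_(i <- r | P i) f i) = \prod_(i <- r | P i) gmono (f i).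
Proof. exact: (big_morph _ gmonoD gmono0). Qed.

Lemma gmonoMn x k : gmono (x *+ k) = gmono x ^+ k.
Proof.
elim: k => [|k IH]; first by rewrite mulr0n gmono0.
by rewrite mulrS exprS gmonoD IH.
Qed.

Definition gtrace (a : galg) : F := a 0.

Lemma gtraceB : {morph gtrace : a b / a - b}.
Proof. by move=> a b; rewrite /gtrace !ffunE. Qed.

HB.instance Definition _ := GRing.isZmodMorphism.Build galg F gtrace gtraceB.

Lemma gtrace_mono x : gtrace (gmono x) = (x == 0)%:R.
Proof. by rewrite /gtrace ffunE eq_sym. Qed.

Lemma pchar_galg p : p \in [pchar F] -> p \in [pchar galg].
Proof.
move=> pFp; rewrite inE (pcharf_prime pFp); apply/eqP/ffunP => g.
by rewrite ffunMnE galg1 ffunE -mulrnA mulnC mulrnA (pcharf0 pFp) mul0rn.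
Qed.

Lemma gtrace_signr m (a : galg) :
  gtrace ((-1) ^+ m * a) = (-1) ^+ m * gtrace a.
Proof.
rewrite -[in LHS]signr_odd -[in RHS]signr_odd.
by case: (odd m); rewrite ?mulN1r ?mul1r ?raddfN.
Qed.

Definition aug_prod_vanish (D : nat) :=
  forall (I : finType) (g : I -> G), (D <= #|I|)%N -> \prod_k (1 - gmono (g k)) = 0.

End GroupAlgebra.

Lemma gmono_sub1_expn_order (G : finZmodType) (F : comNzRingType) p (x : G) :
  p \in [pchar F] -> p.-nat #[x]%g -> (gmono F x - 1) ^+ #[x]%g = 0.
Proof.
move=> pFp px.
have pRx : [pchar galg G F].-nat #[x]%g.
  by apply: sub_in_pnat px => q _; rewrite inE => /eqP ->; apply: pchar_galg.
have x_order : x *+ #[x]%g = 0 := expg_order x.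
by rewrite exprDn_pchar // exprNn_pchar // expr1n -gmonoMn x_order gmono0 subrr.
Qed.

Lemma pigeonhole_fiber (I J : finType) (phi : I -> J) (n : J -> nat) :
  (\sum_j (n j).-1 < #|I|)%N -> exists j, (n j <= #|[set i | phi i == j]|)%N.
Proof.
move=> I_big; suff /existsP : [exists j, n j <= #|[set i | phi i == j]|]%N by [].
apply: contraTT I_big => /existsPn small.
rewrite -leqNgt -sum1_card (partition_big phi predT) //=.
apply: leq_sum => j _; rewrite sum1dep_card.
by have := small j; rewrite cardsE -ltnNge; case: (n j).
Qed.

Section AugmentationNilpotent.
Variables (G : finZmodType) (F : comNzRingType) (r : nat) (e : 'I_r -> G) (n : 'I_r -> nat).
Hypothesis e_gen : forall g : G, exists k : 'I_r -> nat, g = \sum_j e j *+ k j.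
Hypothesis e_nil : forall j, (gmono F (e j) - 1) ^+ n j = 0.

Local Notation y j := (gmono F (e j) - 1).

Lemma one_sub_gmono_span g :
  exists u : 'I_r -> galg G F, 1 - gmono F g = \sum_j y j * u j.
Proof.
have [k ->] := e_gen g; elim/big_ind: _ => [|a b [u hu] [v hv]|j _].
- by exists (fun=> 0); rewrite gmono0 subrr big1 // => j _; rewrite mulr0.
- exists (fun j => u j + v j * gmono F a).
  have -> : 1 - gmono F (a + b) = (1 - gmono F a) + (1 - gmono F b) * gmono F a.
    by rewrite gmonoD mulrBl mul1r [_ * gmono F a]mulrC addrA subrK.
  rewrite hu hv mulr_suml -big_split.
  by apply: eq_bigr => j _; rewrite mulrDr mulrA.
- pose c := \sum_(m < k j) gmono F (e j) ^+ m.
  exists (fun l => if l == j then - c else 0).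
  rewrite (bigD1 j) //= eqxx big1 ?addr0 => [|l /negbTE ->]; last by rewrite mulr0.
  by rewrite gmonoMn -opprB subrX1 mulrN.
Qed.

Lemma aug_prod_vanish_basis D : (\sum_j (n j).-1 < D)%N -> aug_prod_vanish G F D.
Proof.
move=> n_lt_D I s /(leq_trans n_lt_D) n_lt_I.
have [u u_span] := fin_all_exists (fun i => one_sub_gmono_span (s i)).
rewrite (eq_bigr _ (fun i _ => u_span i)) bigA_distr_bigA /=; apply: big1 => phi _.
have [j fiber_j] := pigeonhole_fiber phi n_lt_I.
rewrite big_split /= (bigID (fun i => phi i == j)) /=.
rewrite (eq_bigr (fun _ => y j)) => [|i /eqP -> //].
by rewrite prodr_const -cardsE -(subnKC fiber_j) exprD e_nil !mul0r.
Qed.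

End AugmentationNilpotent.

Section CyclicBasis.
Variables (G : finZmodType) (r : nat) (e : 'I_r -> G).
Hypothesis e_dprod : (\big[dprod/1]_(j < r) <[e j]>)%g = [set: G].

Lemma cyclic_basis_unique (c1 c2 : 'I_r -> G) :
  (forall j, c1 j \in <[e j]>%g) -> (forall j, c2 j \in <[e j]>%g) ->
  \sum_j c1 j = \sum_j c2 j -> c1 =1 c2.
Proof.
move=> c1e c2e c12 j.
have [c [_ _ c_unique]] := mem_bigdprod e_dprod (in_setT (\sum_j c1 j)).
rewrite (c_unique c1 (fun j _ => c1e j) erefl j isT).
by rewrite (c_unique c2 (fun j _ => c2e j) c12 j isT).
Qed.

Lemma cyclic_basis_span g : exists k : 'I_r -> nat, g = \sum_j e j *+ k j.
Proof.
have [c [c_e -> _]] := mem_bigdprod e_dprod (in_setT g).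
have /fin_all_exists [k kP] j : exists m, c j = e j *+ m.
  by have /cycleP [m ->] := c_e j isT; exists m.
by exists k; apply: eq_bigr => j _; apply: kP.
Qed.

Lemma cyclic_basis_indep (k : 'I_r -> nat) :
  (forall j, k j < #[e j]%g)%N -> \sum_j e j *+ k j = 0 -> forall j, k j = 0%N.
Proof.
move=> k_lt k0 j; have k0' : \sum_j e j *+ k j = \sum_(j < r) (0 : G) by rewrite k0 big1.
have /eqP := cyclic_basis_unique (fun j => mem_cycle (e j) (k j)) (fun j => group1 _) k0' j.
rewrite -[_ == _]/((e j ^+ k j)%g == 1%g) -order_dvdn => order_dvd.
apply/eqP; rewrite -leqn0 leqNgt; apply/negP => /dvdn_leq/(_ order_dvd).
by rewrite leqNgt k_lt.
Qed.

Lemma cyclic_basis_inj : (forall j, 1 < #[e j]%g)%N -> injective e.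
Proof.
move=> e_gt1 j l ejl; apply/eqP/negPn/negP => jl.
pose delta (i : 'I_r) (x : G) i' := if i' == i then x else 0.
have delta_sum i x : \sum_i' delta i x i' = x.
  by rewrite (bigD1 i) //= /delta eqxx big1 ?addr0 // => i' /negbTE ->.
have delta_cycle i i' : delta i (e i) i' \in <[e i']>%g.
  by rewrite /delta; case: eqP => [->|_]; [apply: cycle_id | apply: group1].
have := cyclic_basis_unique (delta_cycle j) (delta_cycle l) _ j.
rewrite !delta_sum /delta eqxx (negbTE jl) => /(_ ejl) ej0.
by have := e_gt1 j; rewrite ej0 -[0]/(1%g : G) order1.
Qed.

End CyclicBasis.

Lemma exists_cyclic_basis (G : finZmodType) : exists r (e : 'I_r -> G),
  (\big[dprod/1]_(j < r) <[e j]>)%g = [set: G] /\ forall j, (1 < #[e j]%g)%N.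
Proof.
have [b defG ordb] := abelian_structure (FinRing.Theory.zmod_abelian [set: G]%G).
have := abelian_type_gt1 [set: G]%G; rewrite -ordb => /allP b_gt1.
exists (size b), (fun j => nth 0 b j); split; first by rewrite -defG (big_nth 0) big_mkord.
by move=> j; apply: b_gt1; apply: map_f; apply: mem_nth.
Qed.

Lemma sum_seq_in_codom (G : finZmodType) r (e : 'I_r -> G) (U : seq G) :
  injective e -> {subset U <= codom e} ->
  \sum_(x <- U) x = \sum_j e j *+ count_mem (e j) U.
Proof.
move=> e_inj; elim: U => [|u U IH] U_e.
  by rewrite big_nil big1 // => j _; rewrite mulr0n.
have /codomP [j0 ->] := U_e u (mem_head u U).
rewrite big_cons IH => [|x xU]; last by apply: U_e; rewrite inE xU orbT.
rewrite [RHS](eq_bigr (fun j => e j *+ (j0 == j) + e j *+ count_mem (e j) U)).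
  rewrite big_split /=; congr (_ + _).
  rewrite (bigD1 j0) //= eqxx big1 ?addr0 // => j.
  by rewrite eq_sym => /negbTE ->.
by move=> j _; rewrite /= (inj_eq e_inj) mulrnDr.
Qed.

Section OlsonSequence.
Variables (G : finZmodType) (r : nat) (e : 'I_r -> G) (n : 'I_r -> nat).
Hypothesis e_inj : injective e.
Hypothesis n_gt0 : forall j, (0 < n j)%N.
Hypothesis e_indep : forall k : 'I_r -> nat,
  (forall j, k j < n j)%N -> \sum_j e j *+ k j = 0 -> forall j, k j = 0%N.

Definition olson_seq : seq G := flatten [seq nseq (n j).-1 (e j) | j <- enum 'I_r].

Lemma size_olson_seq : size olson_seq = (\sum_j (n j).-1)%N.
Proof.
rewrite size_flatten /shape -map_comp sumnE big_map big_enum /=.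
by apply: eq_bigr => j _; rewrite /= size_nseq.
Qed.

Lemma count_olson_seq j : count_mem (e j) olson_seq = (n j).-1.
Proof.
rewrite count_flatten -map_comp sumnE big_map big_enum /= (bigD1 j) //=.
rewrite count_nseq /= eqxx mul1n big1 ?addn0 // => l lj.
by rewrite count_nseq /= (inj_eq e_inj) (negbTE lj).
Qed.

Lemma olson_seq_in_codom : {subset olson_seq <= codom e}.
Proof.
move=> x /flattenP [_ /mapP [j _ ->]] /nseqP [-> _].
exact: codom_f.
Qed.

Lemma olson_seq_zero_sumfree : zero_sumfree olson_seq.
Proof.
move=> [U [U_sub U_gt0 U0]].
have U_e : {subset U <= codom e}.
  move=> x xU; apply: olson_seq_in_codom.
  by rewrite -has_pred1 has_count (leq_trans _ (U_sub x)) // -has_count has_pred1.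
pose k j := count_mem (e j) U.
have k_lt j : (k j < n j)%N.
  by apply: leq_ltn_trans (U_sub (e j)) _; rewrite count_olson_seq prednK.
have k0 : \sum_j e j *+ k j = 0 by rewrite -(sum_seq_in_codom e_inj U_e).
have [u uU] : exists u, u \in U by case: (U) U_gt0 => // u U' _; exists u; rewrite mem_head.
have /codomP [j ej] := U_e u uU.
have := e_indep k_lt k0 j; rewrite /k -ej => count_u0.
by move: uU; rewrite -has_pred1 has_count count_u0.
Qed.

End OlsonSequence.

Lemma aug_prod_vanish_pgroup (G : finZmodType) p D :
  prime p -> p.-nat #|G| ->
  (forall S : seq G, (D <= size S)%N -> has_nonempty_zs S) -> aug_prod_vanish G 'F_p D.
Proof.
move=> p_pr G_p D_zs; have [r [e [e_dprod e_gt1]]] := exists_cyclic_basis G.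
have olson_lt_D : (\sum_j (#[e j]%g).-1 < D)%N.
  rewrite -(size_olson_seq e) ltnNge; apply/negP => /D_zs.
  apply: olson_seq_zero_sumfree (cyclic_basis_inj e_dprod e_gt1) _ (cyclic_basis_indep e_dprod).
  by move=> j; apply: order_gt0.
apply: (aug_prod_vanish_basis (cyclic_basis_span e_dprod)) olson_lt_D => j.
apply: gmono_sub1_expn_order (pchar_Fp p_pr) _.
by apply: pnat_dvd G_p; rewrite -cardsT order_dvdG ?inE.
Qed.

Section OneSubX.
Variable R : comNzRingType.

Lemma coef0_1subX_exp m : (((1 - 'X) ^+ m : {poly R}))`_0 = 1.
Proof.
elim: m => [|m IH]; first by rewrite expr0 coefC.
by rewrite exprS mulrBl mul1r coefB coefXM /= subr0 IH.
Qed.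

Lemma coef1_1subX_exp m : (((1 - 'X) ^+ m : {poly R}))`_1 = - m%:R.
Proof.
elim: m => [|m IH]; first by rewrite expr0 coefC oppr0.
by rewrite exprS mulrBl mul1r coefB coefXM /= IH coef0_1subX_exp -opprD -natr1.
Qed.

Lemma map_poly_1subX_expM (S : comNzRingType) (f : {additive R -> S}) m (q : {poly R}) :
  map_poly f ((1 - 'X) ^+ m * q) = (1 - 'X) ^+ m * map_poly f q.
Proof.
elim: m => [|m IH]; first by rewrite !expr0 !mul1r.
rewrite !exprS -!mulrA -IH; apply/polyP => k.
rewrite coef_map !mulrBl !mul1r !coefB !coefXM !coef_map raddfB.
by case: k => [|k] //=; rewrite raddf0.
Qed.

End OneSubX.

Lemma size_1subX_exp (R : idomainType) m : size ((1 - 'X) ^+ m : {poly R}) = m.+1.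
Proof.
have size1X : size (1 - 'X : {poly R}) = 2 by rewrite -opprB size_polyN -polyC1 size_XsubC.
have := size_exp (1 - 'X : {poly R}) m; rewrite size1X mul1n => size_m.
by rewrite -[in RHS]size_m prednK // size_poly_gt0 expf_neq0 // -size_poly_gt0 size1X.
Qed.

Section SubsumPoly.
Variables (G : finZmodType) (F : comNzRingType).
Local Notation R := (galg G F).

Definition subsum_poly (s : seq G) : {poly R} := \prod_(x <- s) (1 - 'X * (gmono F x)%:P).

Definition zs_sets (s : seq G) (j : nat) : {set {set 'I_(size s)}} :=
  [set A : {set 'I_(size s)} | (#|A| == j) && (\sum_(k in A) s`_k == 0)].

Lemma gtrace_coef_subsum_poly s j :
  gtrace (subsum_poly s)`_j = (-1) ^+ j * #|zs_sets s j|%:R.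
Proof.
have -> : subsum_poly s = \prod_(k < size s) ('X * (- gmono F s`_k)%:P + 1).
  by rewrite /subsum_poly (big_nth 0) big_mkord; apply: eq_bigr => k _; rewrite polyCN mulrN addrC.
rewrite bigA_distr coef_sum raddf_sum.
have term (A : {set 'I_(size s)}) : \prod_k (if k \in A then 'X * (- gmono F s`_k)%:P else 1) =
    ((-1) ^+ #|A| * gmono F (\sum_(k in A) s`_k)) *: 'X^#|A|.
  rewrite -big_mkcond big_split prodr_const -rmorph_prod prodrN -gmono_sum /=.
  by rewrite mulrC mul_polyC.
under eq_bigr => A _ do rewrite term coefZ coefXn mulr_natr raddfMn /= gtrace_signr gtrace_mono.
rewrite -sum1_card natr_sum mulr_sumr [RHS]big_mkcond /=; apply: eq_bigr => A _.
rewrite inE [j == _]eq_sym; case: (#|A| =P j) => [->|_]; last by rewrite mulr0n.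
by case: eqP; rewrite ?mulr1 ?mulr0.
Qed.

Lemma zs_sets0 s : zs_sets s 0 = [set set0].
Proof.
apply/setP => A; rewrite !inE cards_eq0; apply: andb_idr => /eqP ->.
by rewrite big_set0.
Qed.

Lemma card_zs_sets1 s : #|zs_sets s 1| = count_mem 0 s.
Proof.
pose P (A : {set 'I_(size s)}) := (#|A| == 1%N) && (\sum_(k in A) s`_k == 0).
rewrite -sum1_card (eq_bigl P).
  rewrite big_mkcondr big_cards1 -sum1_count [RHS](big_nth 0) big_mkord [RHS]big_mkcond.
  by apply: eq_bigr => k _; rewrite big_set1.
by move=> A; rewrite inE.
Qed.

Lemma subsum_poly_div (D i : nat) s :
  aug_prod_vanish G F D ->
  (size s + 1 = D + i)%N -> exists Q, subsum_poly s = (1 - 'X) ^+ i * Q.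
Proof.
move=> aug_D size_s; set n := size s.
have -> : subsum_poly s = \prod_(k < n) ('X * (1 - gmono F s`_k)%:P + (1 - 'X)).
  rewrite /subsum_poly (big_nth 0) big_mkord; apply: eq_bigr => k _.
  by rewrite polyCB polyC1 mulrBr mulr1 [RHS]addrC addrA subrK.
rewrite bigA_distr.
have /fin_all_exists [Q QP] (A : {set 'I_n}) : exists QA,
    \prod_k (if k \in A then 'X * (1 - gmono F s`_k)%:P else 1 - 'X) = (1 - 'X) ^+ i * QA.
  rewrite (bigID (mem A)) /= (eq_bigr (fun k : 'I_n => 'X * (1 - gmono F s`_k)%:P)) => [|k ->] //.
  rewrite [X in _ * X](eq_bigr (fun=> 1 - 'X)) => [|k /negbTE ->] //.
  rewrite big_split /= !prodr_const -rmorph_prod /=.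
  have -> : #|[pred k | k \notin A]| = (n - #|A|)%N.
    have -> : #|[pred k | k \notin A]| = #|[predC A]| by apply: eq_card.
    by have := cardC A; rewrite card_ord; lia.
  have [A_small|A_big] := ltnP #|A| D; last first.
    exists 0; rewrite big_enum_val aug_D ?card_ord //.
    by rewrite polyC0 mulr0 mul0r mulr0.
  have i_le : (i <= n - #|A|)%N by move: size_s A_small; rewrite -/n; lia.
  exists ('X ^+ #|A| * (\prod_(k in A) (1 - gmono F s`_k))%:P * (1 - 'X) ^+ (n - #|A| - i)).
  by rewrite -(subnKC i_le) exprD addKn mulrCA.
by exists (\sum_A Q A); rewrite mulr_sumr; apply: eq_bigr => A _; apply: QP.
Qed.

End SubsumPoly.

Lemma zs_sets_eq0 (G : finZmodType) (s : seq G) (i : nat) :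
  (forall U, submseq U s -> zero_sum U -> (size U <= i)%N) ->
  forall j, (i < j)%N -> zs_sets s j = set0.
Proof.
move=> s_small j ij; apply/setP => A; rewrite !inE; apply/negP => /andP [/eqP cardA sumA].
pose U := [seq s`_k | k : 'I_(size s) in A].
have U_sub : submseq U s.
  move=> x; rewrite (_ : s = [seq s`_k | k : 'I_(size s)]).
    by apply/leq_count_subseq/map_subseq; rewrite enumT; apply: filter_subseq.
  by rewrite -[s in LHS](mkseq_nth 0) /mkseq -val_enum_ord -map_comp.
have U0 : zero_sum U by rewrite /zero_sum big_image /=; apply/eqP.
by have := s_small U U_sub U0; rewrite size_image cardA leqNgt ij.
Qed.

Lemma count_mem0_subsum (G : finZmodType) (F : idomainType) (D i : nat) (s : seq G) :
  aug_prod_vanish G F D ->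
  (size s + 1 = D + i)%N -> (forall j, (i < j)%N -> zs_sets s j = set0) ->
  (count_mem 0 s)%:R = i%:R :> F.
Proof.
move=> aug_D size_s zs_big; have [Q sQ] := subsum_poly_div aug_D size_s.
pose f := map_poly (@gtrace G F) (subsum_poly F s).
have f_coef j : f`_j = (-1) ^+ j * #|zs_sets s j|%:R.
  by rewrite coef_map /= gtrace_coef_subsum_poly.
have f0 : f`_0 = 1 by rewrite f_coef zs_sets0 cards1 mulr1.
have f_size : (size f <= i.+1)%N.
  by apply/leq_sizeP => j ij; rewrite f_coef zs_big // cards0 mulr0.
set u := map_poly (@gtrace G F) Q.
have f_fact : f = (1 - 'X) ^+ i * u by rewrite /f sQ map_poly_1subX_expM.
have u_neq0 : u != 0.
  by apply/eqP => u0; move/eqP: f0; rewrite f_fact u0 mulr0 coef0 eq_sym oner_eq0.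
have u_const : u = (u`_0)%:P.
  have pow_neq0 : (1 - 'X) ^+ i != 0 :> {poly F} by rewrite -size_poly_gt0 size_1subX_exp.
  apply: size1_polyC; move: f_size; rewrite f_fact size_mul // size_1subX_exp addSn /=.
  by rewrite -addn1 leq_add2l.
have u_1 : u`_0 = 1 by rewrite -f0 f_fact {2}u_const coefMC coef0_1subX_exp mul1r.
have := f_coef 1; rewrite f_fact u_const u_1 coefMC coef1_1subX_exp mulr1 card_zs_sets1.
by rewrite expr1 mulN1r => /oppr_inj.
Qed.

Lemma natr_Fp_inj p m n : prime p -> (m < p)%N -> (n < p)%N ->
  (m%:R : 'F_p) = n%:R -> m = n.
Proof. by move=> p_pr mp np /(congr1 (@nat_of_ord _)); rewrite !val_Fp_nat // !modn_small. Qed.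

Lemma perm_zero_part (G : finZmodType) (S : seq G) :
  perm_eq S (nseq (count_mem 0 S) 0 ++ [seq x <- S | x != 0]).
Proof.
have -> : nseq (count_mem 0 S) 0 = [seq x <- S | x == 0 :> G].
  by elim: S => //= x S IH; case: (x =P 0) => [->|_] /=; rewrite IH.
by rewrite perm_sym; apply/permPl/(perm_filterC (pred1 0)).
Qed.

Section ZeroPart.
Variables (G : finZmodType) (S : seq G) (i : nat).
Hypothesis S_small : forall U, submseq U S -> zero_sum U -> (size U <= i)%N.

Lemma zero_sum_nseq0 k : zero_sum (nseq k (0 : G)).
Proof. by rewrite /zero_sum big_nseq iter_fix // addr0. Qed.

Lemma count_mem0_le : (count_mem 0%R S <= i)%N.
Proof.
have := S_small (U := nseq (count_mem 0 S) (0 : G)); rewrite size_nseq; apply; last first.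
  exact: zero_sum_nseq0.
by move=> x; rewrite count_nseq /=; case: eqP => [->|_]; rewrite ?mul1n ?mul0n.
Qed.

Lemma nonzero_part_zero_sumfree :
  count_mem (0 : G) S = i -> zero_sumfree [seq x <- S | x != 0].
Proof.
move=> count0 [U [U_sub U_gt0 U0]].
have U_nz : count_mem 0 U = 0%N.
  apply/eqP; rewrite -leqn0; apply: leq_trans (U_sub 0) _.
  by rewrite leqn0; apply/eqP/count_memPn; rewrite mem_filter eqxx.
have zU_sub : submseq (nseq i 0 ++ U) S.
  move=> x; rewrite count_cat count_nseq /=; case: eqP => [<-|_].
    by rewrite U_nz count0 mul1n addn0.
  by rewrite mul0n add0n (leq_trans (U_sub x)) // leq_count_subseq ?filter_subseq.
have zU0 : zero_sum (nseq i 0 ++ U) by rewrite /zero_sum big_cat /= U0 zero_sum_nseq0 addr0.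
have := S_small zU_sub zU0; rewrite size_cat size_nseq.
by rewrite -[X in (_ <= X)%N]addn0 leq_add2l leqNgt U_gt0.
Qed.

End ZeroPart.

Unset Implicit Arguments.

Theorem corollary2p2 (p : nat) (H G : finZmodType) (f : G -> ('Z_p * H)%type)
  (D : nat) (S : seq G) (i : nat) :
  prime p ->
  p.-nat #|H| ->
  (forall x y : G, f (x + y) = f x + f y) ->
  bijective f ->
  is_davenport G D ->
  normal_seq D S ->
  size S = (D + i - 1)%N ->
  (1 <= i <= p - 1)%N ->
  exists T : seq G, perm_eq S (nseq i 0 ++ T) /\ zero_sumfree T.
Proof.
move=> p_pr H_p _ f_bij [_ D_zs _] [_ S_normal] size_S /andP [i_gt0 i_lt].
have G_p : p.-nat #|G|.
  rewrite (bij_eq_card f_bij) card_prod pnatM H_p andbT card_ord Zp_cast ?prime_gt1 //.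
  exact: pnat_id.
have aug_D := aug_prod_vanish_pgroup p_pr G_p D_zs.
have S_small U : submseq U S -> zero_sum U -> (size U <= i)%N.
  by move=> U_sub U0; have := S_normal U U_sub U0; rewrite size_S; lia.
have i_lt_p : (i < p)%N by move: i_lt (prime_gt1 p_pr); lia.
have count0 : count_mem 0 S = i.
  apply: natr_Fp_inj p_pr (leq_ltn_trans (count_mem0_le S_small) i_lt_p) i_lt_p _.
  apply: (count_mem0_subsum aug_D) (zs_sets_eq0 S_small).
  by rewrite size_S; lia.
exists [seq x <- S | x != 0]; split; last exact: nonzero_part_zero_sumfree S_small count0.
by rewrite -{1}count0 perm_zero_part.
Qed.
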